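(* Let $s\ge 1$ be an integer, let $(G,Z)$ be a plantation, let $F=G\setminus Z$, and let $N$ be the set of vertices of $V(G)\setminus Z$ with a neighbour in $Z$. Suppose that every component of $F$ contains at least two vertices of $N$. Then there is a normal set $\mathcal{S}$ of transitions of $(G,Z)$ with $|\mathcal{S}|\ge |N|/4$.
   Context: Graphs are finite and simple. Two subgraphs are anticomplete if their vertex sets are disjoint and no edge joins them. $G$ is $s\mathcal{O}$-free if no $s$ cycles of $G$ are pairwise vertex-disjoint and pairwise anticomplete. $Z\subseteq V(G)$ is cycle-hitting if every cycle of $G$ has a vertex in $Z$. A plantation is a pair $(G,Z)$ with $G$ an $s\mathcal{O}$-free graph and $Z$ cycle-hitting. A transition of $(G,Z)$ is a path of $F$ of length at least one with both ends in $N$ and no internal vertex in $N$. A set $\mathcal{S}$ of transitions is normal if (i) for all distinct $P,Q\in\mathcal{S}$, either $P,Q$ are anticomplete or $P,Q$ have a common end, and (ii) each $P\in\mathcal{S}$ has an edge that belongs to no other member of $\mathcal{S}$. *)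

From mathcomp Require Import all_boot.
Set Implicit Arguments. Unset Strict Implicit. Unset Printing Implicit Defensive.

Section Graphs.
Variables (T : finType) (e : rel T).

Definition simple_graph := symmetric e /\ irreflexive e.

Definition is_cycle (c : seq T) : Prop :=
  [/\ 3 <= size c, uniq c & cycle e c].

Definition anticomplete (A B : {set T}) : Prop :=
  [disjoint A & B] /\ (forall x y, x \in A -> y \in B -> ~~ e x y).

Definition sO_free (s : nat) : Prop :=
  ~ exists cs : seq (seq T),
      [/\ size cs = s,
          (forall i, i < s -> is_cycle (nth [::] cs i)) &
          (forall i j, i < s -> j < s -> i != j ->
             anticomplete [set x in nth [::] cs i] [set x in nth [::] cs j])].

Definition cycle_hitting (Z : {set T}) : Prop :=
  forall c, is_cycle c -> exists2 x, x \in c & x \in Z.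

Definition plantation (s : nat) (Z : {set T}) : Prop :=
  simple_graph /\ sO_free s /\ cycle_hitting Z.

Definition Frel (Z : {set T}) : rel T :=
  fun x y => [&& e x y, x \notin Z & y \notin Z].

Definition Nset (Z : {set T}) : {set T} :=
  [set x | (x \notin Z) && [exists z, (z \in Z) && e x z]].

(* A path of F given by its vertex sequence; its length is size p - 1. *)
Definition is_pathF (Z : {set T}) (p : seq T) : Prop :=
  match p with
  | [::] => False
  | x :: q => uniq p /\ path (Frel Z) x q
  end.

Definition ends (p : seq T) : seq T :=
  if p is x :: q then [:: x; last x q] else [::].

Definition internal (p : seq T) : seq T :=
  if p is x :: q then behead (belast x q) else [::].

Definition pedges (p : seq T) : seq {set T} :=
  [seq [set ab.1; ab.2] | ab <- zip p (behead p)].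

Definition transition (Z : {set T}) (p : seq T) : Prop :=
  [/\ is_pathF Z p, 2 <= size p,
      (forall x, x \in ends p -> x \in Nset Z) &
      (forall x, x \in internal p -> x \notin Nset Z)].

(* A normal set of transitions, given as a list S; members are indexed, and
   condition (ii) forces distinct indices to be distinct subgraphs, so
   size S is the number of transitions in the set. *)
Definition normal_set (S : seq (seq T)) : Prop :=
  (forall i j, i < size S -> j < size S -> i != j ->
     let P := nth [::] S i in let Q := nth [::] S j in
     anticomplete [set x in P] [set x in Q] \/
     exists2 x, x \in ends P & x \in ends Q) /\
  (forall i, i < size S -> exists2 E, E \in pedges (nth [::] S i) &
     forall j, j < size S -> j != i -> E \notin pedges (nth [::] S j)).

End Graphs.

From mathcomp Require Import all_boot zify.
Set Implicit Arguments. Unset Strict Implicit. Unset Printing Implicit Defensive.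

(* Since Z meets every cycle, F = G \ Z is a forest.  Anchor every component
   of F at a vertex of N and take a breadth-first spanning tree from there.
   Each non-anchor vertex v of N climbs the tree to its nearest proper
   ancestor in N; this climb is a transition, and the edge from v to its
   parent lies on no other climb.  Call the number of vertices of N strictly
   above v its level.  Two climbs whose levels agree mod 3 either share their
   upper end or are disjoint and anticomplete: F has no edge outside the
   tree, and a tree edge or a common vertex would force their levels to
   differ by 1 or 2.  In a component with k >= 1 non-anchor vertices of N,
   the most frequent residue class has at least ceil(k/3) >= (k+1)/4 of them. *)

Lemma find_drop (S : Type) (p : pred S) n s :
  n <= find p s -> find p (drop n s) = find p s - n.
Proof.
move=> le_n; have le_ns := leq_trans le_n (find_size p s).
rewrite -[in RHS](cat_take_drop n s) find_cat has_take_leq // ltnNge le_n /=.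
by rewrite size_takel // addKn.
Qed.

Lemma card_sum_fibers (S R : finType) (B : {set S}) (f : S -> R) :
  #|B| = \sum_(r : R) #|[set x in B | f x == r]|.
Proof.
rewrite -sum1_card (partition_big f predT) //=; apply: eq_bigr => r _.
by rewrite -sum1_card; apply: eq_bigl => x; rewrite inE.
Qed.

Lemma card_le_best_class (S : finType) n (B : {set S}) (f : S -> 'I_n.+1) :
  #|B| <= n.+1 * #|[set x in B | f x == [arg max_(c > ord0) #|[set x in B | f x == c]|]]|.
Proof.
case: arg_maxnP => // c _ max_c; rewrite (card_sum_fibers B f).
have -> : n.+1 * #|[set x in B | f x == c]| = \sum_(i : 'I_n.+1) #|[set x in B | f x == c]|.
  by rewrite sum_nat_const card_ord mulnC.
by apply: leq_sum => i _; apply: max_c.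
Qed.

Lemma mem_internal (T : finType) (a : T) s x : uniq (a :: s) ->
  x \in internal (a :: s) -> [/\ x \in s, x != a & x != last a s].
Proof.
case: s => [//|w s]; rewrite cons_uniq => /andP[aws uws] xw.
have {}xw : x \in belast w s := xw.
have xws := mem_belast xw; split=> //; first by apply: contraNneq aws => xa; rewrite -xa.
by apply: contraTneq uws => /= xl; rewrite -cons_uniq lastI rcons_uniq -xl xw.
Qed.

Lemma mem_pedges (T : finType) (p : seq T) a b : [set a; b] \in pedges p -> a \in p.
Proof.
rewrite /pedges; elim: p => [|x [|y p] IH] //=; rewrite in_cons => /orP[/eqP/setP/(_ a)|/IH].
  by rewrite !inE eqxx /= => /esym/orP[]/eqP->; rewrite eqxx ?orbT.
by move=> ayp; rewrite in_cons ayp orbT.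
Qed.

Lemma normal_set_map (T : finType) (e : rel T) (f : T -> seq T) (L : seq T) :
  uniq L ->
  {in L &, forall u v, u != v -> anticomplete e [set x in f u] [set x in f v] \/
                                 exists2 x, x \in ends (f u) & x \in ends (f v)} ->
  {in L, forall u, exists2 E, E \in pedges (f u) &
                     {in L, forall v, v != u -> E \notin pedges (f v)}} ->
  normal_set e (map f L).
Proof.
move=> uL pairs private; split=> [i j|i] lt_i; rewrite size_map in lt_i.
  have x0 : T by case: L lt_i {uL pairs private} => // x0.
  rewrite size_map => lt_j ij /=; rewrite !(nth_map x0) //.
  by apply: pairs; rewrite ?mem_nth ?nth_uniq.
have x0 : T by case: L lt_i {uL pairs private} => // x0.
rewrite (nth_map x0) //; have [E Eu priv] := private _ (mem_nth x0 lt_i).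
exists E => // j; rewrite size_map => lt_j ji; rewrite (nth_map x0) //.
by apply: priv; rewrite ?mem_nth ?nth_uniq.
Qed.

Section AnchoredForest.
Variables (T : finType) (g : rel T) (A : {set T}).
Hypothesis gsym : symmetric g.

Let gcsym : connect_sym g := sym_connect_sym gsym.

(* When the component of [x] avoids [A], [anchor x] falls back to its [root]. *)
Definition anchor x := odflt (root g x) [pick y in A | connect g x y].

Lemma connect_anchor x : connect g x (anchor x).
Proof. by rewrite /anchor; case: pickP => [y /andP[]|_] //=; apply: connect_root. Qed.

Lemma anchor_connect x y : connect g x y -> anchor x = anchor y.
Proof.
move=> xy; rewrite /anchor (rootP gcsym xy); congr odflt.
by apply: eq_pick => z; rewrite /= (same_connect gcsym xy).
Qed.

Lemma anchor_in x y : y \in A -> connect g x y -> anchor x \in A.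
Proof.
move=> yA xy; rewrite /anchor; case: pickP => [z /andP[] //|/(_ y)] /=.
by rewrite yA xy.
Qed.

Definition reaches_within x n :=
  [exists p : n.-tuple T, path g x p && (last x p == anchor x)].

Lemma reaches_withinP x n : reflect
  (exists2 p, size p = n & path g x p /\ last x p = anchor x) (reaches_within x n).
Proof.
apply: (iffP existsP) => [[p /andP[gp /eqP lp]]|[p sp [gp lp]]].
  by exists (val p); rewrite ?size_tuple.
by exists (Tuple (introT eqP sp)); rewrite /= gp lp eqxx.
Qed.

Lemma reaches_within_exists x : exists n, reaches_within x n.
Proof.
have /connectP[p gp lp] := connect_anchor x.
by exists (size p); apply/reaches_withinP; exists p.
Qed.

Definition depth x := ex_minn (reaches_within_exists x).

Lemma reaches_within_depth x : reaches_within x (depth x).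
Proof. by rewrite /depth; case: ex_minnP. Qed.

Lemma depth_min x n : reaches_within x n -> depth x <= n.
Proof. by rewrite /depth; case: ex_minnP => m _; apply. Qed.

Lemma depth_eq0 x : (depth x == 0) = (x == anchor x).
Proof.
apply/eqP/eqP => [d0|xa]; last first.
  by apply/eqP; rewrite -leqn0 depth_min //; apply/reaches_withinP; exists [::].
have /reaches_withinP[p sp [_ lp]] := reaches_within_depth x.
by move: sp lp; rewrite d0; case: p.
Qed.

Lemma depth_edge x y : g x y -> depth y <= (depth x).+1.
Proof.
move=> gxy; apply: depth_min; apply/reaches_withinP.
have /reaches_withinP[p sp [gp lp]] := reaches_within_depth x.
exists (x :: p); rewrite /= ?sp // gsym gxy gp lp.
by rewrite (anchor_connect (connect1 gxy)).
Qed.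

Lemma depth_descent x : 0 < depth x -> exists2 y, g x y & depth y < depth x.
Proof.
have /reaches_withinP[p sp [gp lp]] := reaches_within_depth x.
case: p sp gp lp => [<- //|y p /= sp /andP[gxy gp] lp] _.
exists y => //; rewrite -sp ltnS depth_min //; apply/reaches_withinP; exists p => //.
by rewrite lp (anchor_connect (connect1 gxy)).
Qed.

Definition parent x := odflt x [pick y | g x y && (depth y < depth x)].

Lemma parent_spec x : 0 < depth x -> g x (parent x) /\ depth (parent x) = (depth x).-1.
Proof.
move=> dx; rewrite /parent; case: pickP => [y /andP[gxy lt]|none] /=.
  by have := depth_edge (_ : g y x); rewrite gsym => /(_ gxy); split=> //; lia.
by case: (depth_descent dx) => y gxy lt; move: (none y); rewrite gxy lt.
Qed.

Lemma parent_depth0 x : depth x = 0 -> parent x = x.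
Proof. by move=> d0; rewrite /parent; case: pickP => [y|] //=; rewrite d0 andbF. Qed.

Lemma depth_parent x : depth (parent x) = (depth x).-1.
Proof.
by case: (posnP (depth x)) => [d0|/parent_spec[]//]; rewrite parent_depth0 d0.
Qed.

Lemma connect_parent x : connect g x (parent x).
Proof.
case: (posnP (depth x)) => [/parent_depth0->|/parent_spec[gx _]]; first exact: connect0.
exact: connect1.
Qed.

Lemma connect_iter_parent k x : connect g x (iter k parent x).
Proof. by elim: k => [|k IH]; rewrite ?connect0 //= (connect_trans IH) ?connect_parent. Qed.

Lemma anchor_iter_parent k x : anchor (iter k parent x) = anchor x.
Proof. by rewrite (anchor_connect (connect_iter_parent k x)). Qed.

Lemma depth_iter_parent k x : depth (iter k parent x) = depth x - k.
Proof. by elim: k => [|k IH]; rewrite ?subn0 //= depth_parent IH subnS. Qed.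

Lemma iter_parent_anchor k x : depth x <= k -> iter k parent x = anchor x.
Proof.
move=> dk; apply/eqP; rewrite -(anchor_iter_parent k) -depth_eq0.
by rewrite depth_iter_parent subn_eq0.
Qed.

Lemma path_parent n x : n <= depth x -> path g x (traject parent (parent x) n).
Proof.
elim: n x => [//|n IH] x dx /=; have [gx dp] := parent_spec (leq_ltn_trans (leq0n n) dx).
by rewrite gx IH // dp; lia.
Qed.

Lemma uniq_traject_parent n x : n <= (depth x).+1 -> uniq (traject parent x n).
Proof.
elim: n x => [//|n IH] x dx; rewrite trajectS /= IH ?depth_parent; last by lia.
rewrite andbT; apply/negP => /trajectP[i lt_in /(congr1 depth)].
by rewrite depth_iter_parent depth_parent; lia.
Qed.

(* [aparent x] is the nearest proper ancestor of [x] in [A], reached in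
   [hops x] steps along [apath x]; [alevel x] counts the proper ancestors in [A]. *)
Definition ancestors x := traject parent (parent x) (depth x).
Definition alevel x := count (mem A) (ancestors x).
Definition hops x := (find (mem A) (ancestors x)).+1.
Definition aparent x := iter (hops x) parent x.
Definition apath x := traject parent x (hops x).+1.

Lemma nth_ancestors x0 i x : i < depth x -> nth x0 (ancestors x) i = iter i.+1 parent x.
Proof.
move=> lt_i; rewrite (set_nth_default (parent x)) ?size_traject //.
by rewrite nth_traject // iterSr.
Qed.

Lemma ancestors_iter_parent a x :
  a <= depth x -> ancestors (iter a parent x) = drop a (ancestors x).
Proof.
move=> le_a; rewrite /ancestors depth_iter_parent -iterS iterSr.
by rewrite -[in RHS](subnKC le_a) trajectD drop_size_cat ?size_traject.
Qed.

Lemma has_ancestors x : x \in A -> 0 < depth x -> has (mem A) (ancestors x).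
Proof.
move=> xA dx; apply/hasP; exists (anchor x); last exact: anchor_in (connect0 g x).
apply/trajectP; exists (depth x).-1; first by rewrite prednK.
by rewrite -iterSr prednK // iter_parent_anchor.
Qed.

Lemma hops_le_depth x : has (mem A) (ancestors x) -> hops x <= depth x.
Proof. by rewrite has_find /ancestors size_traject. Qed.

Lemma aparent_in x : has (mem A) (ancestors x) -> aparent x \in A.
Proof.
move=> hA; rewrite /aparent /hops -(nth_ancestors x); first exact: nth_find.
by move: hA; rewrite has_find /ancestors size_traject.
Qed.

Lemma iter_parent_notin i x : 0 < i < hops x -> iter i parent x \notin A.
Proof.
case: i => [//|i] /andP[_ lt_i]; have le_fd := find_size (mem A) (ancestors x).
rewrite /ancestors size_traject -/(ancestors x) in le_fd; rewrite /hops ltnS in lt_i.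
rewrite -(nth_ancestors x); last by lia.
by apply/negbT; apply: before_find.
Qed.

Lemma aparent_iter_parent a x : a < hops x -> aparent (iter a parent x) = aparent x.
Proof.
move=> lt_a; have le_fd := find_size (mem A) (ancestors x).
rewrite /ancestors size_traject -/(ancestors x) in le_fd; rewrite /hops ltnS in lt_a.
rewrite /aparent /hops ancestors_iter_parent ?find_drop; try lia.
by rewrite -iterD -subSn // subnK // ltnW.
Qed.

Lemma alevel_aparent x : has (mem A) (ancestors x) -> alevel x = (alevel (aparent x)).+1.
Proof.
move=> hA; rewrite /alevel /aparent ancestors_iter_parent ?hops_le_depth //.
rewrite -[in LHS](cat_take_drop (find (mem A) (ancestors x)) (ancestors x)).
have nA : nth x (ancestors x) (find (mem A) (ancestors x)) \in A := nth_find x hA.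
rewrite count_cat (drop_nth x) -?has_find //= nA.
suff -> : count (mem A) (take (find (mem A) (ancestors x)) (ancestors x)) = 0 by [].
by apply/eqP; rewrite -leqn0 leqNgt -has_count has_take_leq ?ltnn ?find_size.
Qed.

Lemma aparent_parent x : 0 < depth x ->
  aparent x = if parent x \in A then parent x else aparent (parent x).
Proof.
move=> dx; have anc : ancestors x = parent x :: ancestors (parent x).
  by rewrite (ancestors_iter_parent (a:=1) (x:=x)) // /ancestors -(prednK dx) /= drop0.
by rewrite /aparent /hops anc /=; case: ifP => //= _; rewrite -iterS iterSr.
Qed.

Lemma connect_apath x y : y \in apath x -> connect g x y.
Proof. by case/trajectP => a _ ->; apply: connect_iter_parent. Qed.

Lemma anchor_apath x y : y \in apath x -> anchor y = anchor x.
Proof. by move/connect_apath/anchor_connect. Qed.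

Lemma apath_in x y : y \in apath x -> y \in A -> y = x \/ y = aparent x.
Proof.
case/trajectP => a; rewrite ltnS leq_eqVlt => /orP[/eqP -> ->|lt_a ->] yA; first by right.
case: (posnP a) => [-> |a_gt0]; first by left.
by have := iter_parent_notin (x:=x) (i:=a); rewrite a_gt0 lt_a yA => /(_ isT).
Qed.

Lemma apath_aparent x y : y \in apath x -> y = aparent x \/ aparent y = aparent x.
Proof.
case/trajectP => a; rewrite ltnS leq_eqVlt => /orP[/eqP -> ->|lt_a ->]; first by left.
by right; apply: aparent_iter_parent.
Qed.

Definition climber v := (v \in A) && (0 < depth v).

Lemma climberP v : reflect (v \in A /\ 0 < depth v) (climber v).
Proof. exact: andP. Qed.

Definition compatible u v := [/\ climber u, climber v, u != v &
  anchor u = anchor v -> alevel u = alevel v %[mod 3]].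

Lemma compatible_sym u v : compatible u v -> compatible v u.
Proof.
case=> cu cv uv res; split=> //; first by rewrite eq_sym.
by move/esym/res->.
Qed.

Lemma climber_aparent_in w : climber w -> aparent w \in A.
Proof. by case/climberP => wA dw; apply/aparent_in/has_ancestors. Qed.

Lemma climber_alevel w : climber w -> alevel w = (alevel (aparent w)).+1.
Proof. by case/climberP => wA dw; apply/alevel_aparent/has_ancestors. Qed.

Lemma apath_disjoint u v x : compatible u v -> aparent u != aparent v ->
  x \in apath u -> x \in apath v -> False.
Proof.
case=> cu cv neq_uv same_res auv xu xv.
have res := same_res (etrans (esym (anchor_apath xu)) (anchor_apath xv)).
have lu := climber_alevel cu; have lv := climber_alevel cv.
case: (boolP (x \in A)) => xA.
  case: (apath_in xu xA) (apath_in xv xA) => -> [eq_v|eq_v].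
  - by rewrite eq_v eqxx in neq_uv.
  - by move: lv; rewrite -eq_v; lia.
  - by move: lu; rewrite eq_v; lia.
  - by rewrite eq_v eqxx in auv.
case: (apath_aparent xu) => [exu|pxu]; first by rewrite exu climber_aparent_in in xA.
case: (apath_aparent xv) => [exv|pxv]; first by rewrite exv climber_aparent_in in xA.
by rewrite -pxu -pxv eqxx in auv.
Qed.

Lemma apath_parent_disjoint u v x : compatible u v -> aparent u != aparent v ->
  0 < depth x -> x \in apath u -> parent x \in apath v -> False.
Proof.
move=> uv auv dx /trajectP[a]; rewrite ltnS leq_eqVlt => /orP[/eqP a_h|lt_a] ex pv.
  case: (uv) => cu cv _ same_res; rewrite a_h -/(aparent u) in ex.
  have cx : climber x by rewrite /climber dx ex climber_aparent_in.
  have res : alevel u = alevel v %[mod 3].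
    by apply: same_res; rewrite -(anchor_apath pv) ex (anchor_iter_parent (hops u).+1).
  have lv := climber_alevel cv; have lx := climber_alevel cx.
  have lu := climber_alevel cu; rewrite -ex in lu.
  have := aparent_parent dx; case: ifP => [pA|pnA] ax; rewrite ax in lx.
    by case: (apath_in pv pA) => eq_p; rewrite eq_p in lx; lia.
  case: (apath_aparent pv) => [epv|eq_a]; first by rewrite epv climber_aparent_in in pnA.
  by rewrite eq_a in lx; lia.
by apply: (apath_disjoint uv auv _ pv); apply/trajectP; exists a.+1; rewrite ?ex.
Qed.

Lemma ends_apath v : ends (apath v) = [:: v; aparent v].
Proof. by rewrite /apath trajectS /ends last_traject. Qed.

Lemma parent_edge_apath v : [set v; parent v] \in pedges (apath v).
Proof. by rewrite /apath /hops !trajectS /pedges /= mem_head. Qed.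

Lemma compatible_notin_apath u v : compatible u v -> v \notin apath u.
Proof.
case=> cu /climberP[vA _] uv same_res; apply/negP => vu.
case: (apath_in vu vA) => [eq_vu|eq_va]; first by rewrite eq_vu eqxx in uv.
have res := same_res (esym (anchor_apath vu)).
by have := climber_alevel cu; rewrite -eq_va; lia.
Qed.

Lemma parent_edge_private u v : compatible u v -> [set v; parent v] \notin pedges (apath u).
Proof. by move/compatible_notin_apath; apply: contra; apply: mem_pedges. Qed.

Definition residue x : 'I_3 := Ordinal (ltn_pmod (alevel x) (isT : 0 < 3)).
Definition climbers r := [set v | climber v && (anchor v == r)].
Definition best_residue r := [arg max_(c > ord0) #|[set v in climbers r | residue v == c]|].
Definition selected := [set v | climber v && (residue v == best_residue (anchor v))].

Lemma selected_compatible u v :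
  u \in selected -> v \in selected -> u != v -> compatible u v.
Proof.
rewrite !inE => /andP[cu /eqP ru] /andP[cv /eqP rv] uv; split=> // auv.
by have := congr1 val (etrans ru (etrans (congr1 best_residue auv) (esym rv))).
Qed.

Lemma card_anchored_le r v0 : v0 \in A -> anchor v0 = r ->
  1 < #|[set y in A | connect g v0 y]| ->
  #|[set v in A | anchor v == r]| <=
    4 * #|[set v in climbers r | residue v == best_residue r]|.
Proof.
move=> v0A <-; set B := [set v in A | anchor v == anchor v0].
have -> : [set y in A | connect g v0 y] = B.
  apply/setP => y; rewrite !inE; case: (y \in A) => //=; apply/idP/eqP.
    by move/anchor_connect->.
  by move=> ay; rewrite (connect_trans (connect_anchor v0)) // -ay gcsym connect_anchor.
have sub : B \subset anchor v0 |: climbers (anchor v0).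
  apply/subsetP => v; rewrite !inE /climber => /andP[-> /eqP av]; rewrite av eqxx.
  rewrite andbT /= -av -depth_eq0 lt0n.
  by case: (depth v == 0).
have : #|B| <= #|climbers (anchor v0)|.+1.
  by apply: leq_trans (subset_leq_card sub) _; rewrite cardsU1 -add1n leq_add2r leq_b1.
have := card_le_best_class (climbers (anchor v0)) residue.
by rewrite /best_residue; lia.
Qed.

Lemma card_le_selected :
  (forall v, v \in A -> 1 < #|[set y in A | connect g v y]|) -> #|A| <= 4 * #|selected|.
Proof.
move=> two_in_component.
rewrite (card_sum_fibers A anchor) (card_sum_fibers selected anchor) big_distrr.
apply: leq_sum => r _.
have [->|[v0 /setIdP[v0A /eqP av0]]] := set_0Vmem [set v in A | anchor v == r].
  by rewrite cards0.
have -> : [set v in selected | anchor v == r] =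
          [set v in climbers r | residue v == best_residue r].
  apply/setP => v; rewrite !inE; case: (anchor v =P r) => [-> | _]; last by rewrite !andbF.
  by rewrite !andbT.
exact: card_anchored_le v0A av0 (two_in_component v0 v0A).
Qed.

Section TreeEdges.
Hypothesis girr : irreflexive g.
Hypothesis g_acyclic : forall c, ~ is_cycle g c.

Lemma rev_path_parent m y :
  m <= depth y -> path g (iter m parent y) (rev (traject parent y m)).
Proof.
elim: m => [//|m IH] dm; rewrite trajectSr rev_rcons /= IH ?andbT; last by lia.
by rewrite gsym; apply: (parent_spec _).1; rewrite depth_iter_parent; lia.
Qed.

Lemma first_common_ancestor x y : anchor x = anchor y ->
  exists i j, [/\ i <= depth x, j <= depth y, iter i parent x = iter j parent y &
    forall k, k < i -> iter k parent x \notin traject parent y (depth y).+1].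
Proof.
move=> axy; set Y := traject parent y (depth y).+1.
have meet_top : exists i, iter i parent x \in Y.
  by exists (depth x); apply/trajectP; exists (depth y); rewrite ?iter_parent_anchor.
case: (ex_minnP meet_top) => i /trajectP[j lt_j eq_ij] min_i.
exists i, j; split=> //.
  by apply: min_i; apply/trajectP; exists (depth y); rewrite ?iter_parent_anchor.
by move=> k lt_ki; apply/negP => /min_i; lia.
Qed.

Lemma nontree_edge_cycle x y : g x y -> depth y <= depth x -> y != parent x ->
  exists c, is_cycle g c.
Proof.
move=> gxy dyx ny.
have [i [j [di dj eq_ij first]]] := first_common_ancestor (anchor_connect (connect1 gxy)).
have d_ij := congr1 depth eq_ij; rewrite !depth_iter_parent in d_ij.
have dxy : depth x <= (depth y).+1 by apply: depth_edge; rewrite gsym.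
have j_gt0 : 0 < j.
  case: j eq_ij d_ij {dj first} => //= eq_iy d_i.
  have [i0|i1] : i = 0 \/ i = 1 by lia.
    by move: gxy; rewrite -eq_iy i0 girr.
  by move: ny; rewrite -eq_iy i1 eqxx.
(* Up from [x] to the first common ancestor, then down to [y]. *)
exists (traject parent x i.+1 ++ rev (traject parent y j)); split.
- by rewrite size_cat size_rev !size_traject; lia.
- rewrite cat_uniq rev_uniq !uniq_traject_parent ?andbT; try lia.
  apply/hasP => -[z]; rewrite mem_rev => /trajectP[m lt_mj ->] /trajectP[k].
  rewrite ltnS leq_eqVlt => /orP[/eqP -> | lt_ki] eq_km.
    by move/(congr1 depth): eq_km; rewrite eq_ij !depth_iter_parent; lia.
  by move/negP: (first k lt_ki); apply; rewrite -eq_km; apply/trajectP; exists m => //; lia.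
- rewrite /= rcons_cat cat_path path_parent // last_traject eq_ij rcons_path.
  rewrite rev_path_parent //=; case: j j_gt0 {eq_ij dj d_ij first} => // j _.
  by rewrite trajectS rev_cons last_rcons gsym.
Qed.

Lemma tree_edge x y : g x y -> y = parent x \/ x = parent y.
Proof.
wlog dyx : x y / depth y <= depth x => [wlog_xy gxy|gxy].
  case: (leqP (depth y) (depth x)) => [dyx|/ltnW dxy]; first exact: wlog_xy.
  by rewrite gsym in gxy; case: (wlog_xy y x dxy gxy); [right|left].
case: (eqVneq y (parent x)) => [|ny]; first by left.
by case: (nontree_edge_cycle gxy dyx ny) => c /g_acyclic.
Qed.

Lemma parent_edge_depth x : g x (parent x) -> 0 < depth x.
Proof. by rewrite lt0n; apply: contraL => /eqP/parent_depth0->; rewrite girr. Qed.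

Lemma apath_no_edge u v x y : compatible u v -> aparent u != aparent v ->
  x \in apath u -> y \in apath v -> g x y -> False.
Proof.
move=> uv auv xu yv gxy; case: (tree_edge gxy) => [ypx|xpy].
  by apply: (apath_parent_disjoint uv auv _ xu); rewrite -?ypx ?parent_edge_depth -?ypx.
apply: (apath_parent_disjoint (compatible_sym uv) _ _ yv); rewrite -?xpy //.
  by rewrite eq_sym.
by rewrite parent_edge_depth // -xpy gsym.
Qed.

End TreeEdges.

End AnchoredForest.

Section Plantation.
Variables (T : finType) (e : rel T) (Z : {set T}).
Hypotheses (esym : symmetric e) (eirr : irreflexive e) (hitZ : cycle_hitting e Z).

Local Notation F := (Frel e Z).
Local Notation N := (Nset e Z).

Lemma Frel_sym : symmetric F.
Proof. by move=> x y; rewrite /Frel esym; congr (_ && _); apply: andbC. Qed.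

Lemma Frel_irr : irreflexive F.
Proof. by move=> x; rewrite /Frel eirr. Qed.

Lemma Frel_notin x y : F x y -> x \notin Z.
Proof. by case/and3P. Qed.

Lemma Frel_acyclic c : ~ is_cycle F c.
Proof.
case=> size_c uc Fc; have eF : subrel F e by move=> x y /and3P[].
have [x xc xZ] := hitZ (And3 size_c uc (sub_cycle eF Fc)).
by move: (Frel_notin (next_cycle Fc xc)); rewrite xZ.
Qed.

Lemma connect_Frel_notin x y : x \notin Z -> connect F x y -> y \notin Z.
Proof.
move=> xZ /connectP[p Fp ->]; elim: p x xZ Fp => //= z p IH x _ /andP[Fxz Fp].
by apply: IH Fp; rewrite Frel_sym in Fxz; apply: Frel_notin Fxz.
Qed.

Lemma N_notin x : x \in N -> x \notin Z.
Proof. by rewrite inE => /andP[]. Qed.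

Lemma transition_apath v : climber F N v -> transition e Z (apath F N v).
Proof.
move=> cv; have /climberP[vN dv] := cv.
have hd := hops_le_depth (has_ancestors Frel_sym vN dv).
have uv : uniq (apath F N v) by apply: (uniq_traject_parent Frel_sym); rewrite ltnS.
move: uv; rewrite /apath trajectS => uv; split=> //.
- by split; last exact: (path_parent Frel_sym).
- move=> x; rewrite -trajectS -/(apath F N v) ends_apath in_cons mem_seq1.
  by case/orP=> /eqP->; [|apply: (climber_aparent_in Frel_sym)].
- move=> x /(mem_internal uv)[xs xv]; rewrite last_traject -/(aparent F N v) => xa.
  have xv' : x \in apath F N v by rewrite /apath trajectS in_cons xs orbT.
  by apply/negP => /(apath_in xv')[]; apply/eqP.
Qed.

Lemma normal_apaths : normal_set e (map (apath F N) (enum (selected F N))).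
Proof.
apply: normal_set_map; first exact: enum_uniq.
  move=> u v; rewrite !mem_enum => su sv uv; have cuv := selected_compatible su sv uv.
  case: (eqVneq (aparent F N u) (aparent F N v)) => [eq_a|ne_a].
    by right; exists (aparent F N u); rewrite !ends_apath !inE eq_a eqxx ?orbT.
  have notZ w x : climber F N w -> x \in apath F N w -> x \notin Z.
    by case/climberP => /N_notin wZ _ /(connect_apath Frel_sym); apply: connect_Frel_notin.
  case: (cuv) => cu cv _ _; left; split.
    apply/pred0P => x /=; apply/negP => /andP[]; rewrite !inE => xu xv.
    exact: (apath_disjoint Frel_sym cuv ne_a xu xv).
  move=> x y; rewrite !inE => xu yv; apply/negP => exy.
  apply: (apath_no_edge Frel_sym Frel_irr Frel_acyclic cuv ne_a xu yv).
  by rewrite /Frel exy (notZ u) // (notZ v).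
move=> v; rewrite mem_enum => sv; exists [set v; parent F N v]; first exact: parent_edge_apath.
move=> u; rewrite mem_enum => su uv.
exact: (parent_edge_private Frel_sym (selected_compatible su sv uv)).
Qed.

End Plantation.

Theorem mainTheorem11 (T : finType) (e : rel T) (s : nat) (Z : {set T}) :
  1 <= s ->
  plantation e s Z ->
  (forall x, x \notin Z ->
     1 < #|[set y in Nset e Z | connect (Frel e Z) x y]|) ->
  exists S : seq (seq T),
    [/\ (forall P, P \in S -> transition e Z P),
        normal_set e S &
        #|Nset e Z| <= 4 * size S].
Proof.
move=> _ [[esym eirr] [_ hitZ]] two_in_component.
exists (map (apath (Frel e Z) (Nset e Z)) (enum (selected (Frel e Z) (Nset e Z)))); split.
- move=> P /mapP[v]; rewrite mem_enum inE => /andP[cv _] ->.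
  exact: transition_apath.
- exact: normal_apaths.
rewrite size_map -cardE; apply: card_le_selected; first exact: Frel_sym.
by move=> v /N_notin; apply: two_in_component.
Qed.
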